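(* Let $\Omega$ be an infinite set, $\kappa$ a regular infinite cardinal with $\kappa\le|\Omega|$, $d$ a $\kappa$-uncrowded (respectively, uniformly $\kappa$-uncrowded) generalized metric on $\Omega$, and $G$ a subgroup of $S=\mathrm{Sym}(\Omega)$ all of whose elements are bounded with respect to $d$. Then for any subset $U\subseteq\mathrm{Sym}(\Omega)$ with $|U|<\kappa$, there exists a generalized metric $d'\le d$ on $\Omega$, again $\kappa$-uncrowded (respectively, uniformly $\kappa$-uncrowded), such that every element of $U$, and hence every element of $\langle G\cup U\rangle$, is bounded with respect to $d'$. Consequently, for subgroups of $S$, the property that there exists a (uniformly) $\kappa$-uncrowded generalized metric on $\Omega$ with respect to which every element of the subgroup is bounded is inherited by every subgroup $H$ with $H\preccurlyeq_\kappa G$, in particular by every $H$ with $H\approx_\kappa G$.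
   Context: $\mathrm{Sym}(\Omega)$ is the group of all permutations of $\Omega$, acting on the right. Let $P=\{r\in\mathbb R:r\ge0\}\cup\{\infty\}$. A generalized metric on $\Omega$ is a function $d:\Omega\times\Omega\to P$ satisfying the usual metric axioms (with values allowed to be $\infty$). $B_d(\alpha,r)=\{\beta:d(\alpha,\beta)<r\}$. $d$ is $\kappa$-uncrowded if $|B_d(\alpha,r)|<\kappa$ for all $\alpha\in\Omega$ and all $r<\infty$; uniformly $\kappa$-uncrowded if for every $r<\infty$ there is a cardinal $\lambda<\kappa$ with $|B_d(\alpha,r)|\le\lambda$ for all $\alpha$. $d'\le d$ means $d'(\alpha,\beta)\le d(\alpha,\beta)$ for all $\alpha,\beta$. For $g\in\mathrm{Sym}(\Omega)$, $\|g\|_d=\sup_{\alpha\in\Omega}d(\alpha,\alpha g)$, and $g$ is bounded if $\|g\|_d<\infty$. For subgroups $G_1,G_2\le S$, $G_1\preccurlyeq_\kappa G_2$ means there is $U\subseteq S$ with $|U|<\kappa$ and $G_1\le\langle G_2\cup U\rangle$; $G_1\approx_\kappa G_2$ means both $G_1\preccurlyeq_\kappa G_2$ and $G_2\preccurlyeq_\kappa G_1$. *)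

From HB Require Import structures.
From mathcomp Require Import all_boot all_order all_algebra.
From mathcomp Require Import boolp classical_sets reals ereal Rstruct.
Set Implicit Arguments. Unset Strict Implicit. Unset Printing Implicit Defensive.
Import Order.TTheory GRing.Theory Num.Theory.
Local Open Scope ring_scope.
Local Open Scope ereal_scope.
Local Open Scope classical_set_scope.

Notation RealR := Rdefinitions.R.

Definition card_le (A B : Type) : Prop := exists f : A -> B, injective f.
Definition card_lt (A B : Type) : Prop := card_le A B /\ ~ card_le B A.

Definition infinite_card (K : Type) : Prop := card_le nat K.

Definition regular_card (K : Type) : Prop :=
  forall (I : Type) (F : I -> set K),
    card_lt I K -> (forall i, card_lt {x : K | F i x} K) ->
    exists x : K, forall i, ~ F i x.

Definition gen_metric (Omega : Type) (d : Omega -> Omega -> \bar RealR) : Prop :=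
  [/\ (forall a b, 0 <= d a b),
      (forall a b, d a b = 0 <-> a = b),
      (forall a b, d a b = d b a) &
      (forall a b c, d a c <= d a b + d b c)].

Definition ball (Omega : Type) (d : Omega -> Omega -> \bar RealR)
  (a : Omega) (r : \bar RealR) : set Omega := [set b | d a b < r].

Definition uncrowded (Omega K : Type) (d : Omega -> Omega -> \bar RealR) : Prop :=
  forall (a : Omega) (r : RealR), card_lt {b : Omega | ball d a r%:E b} K.

Definition unif_uncrowded (Omega K : Type) (d : Omega -> Omega -> \bar RealR) : Prop :=
  forall r : RealR, exists L : Type, card_lt L K /\
    forall a : Omega, card_le {b : Omega | ball d a r%:E b} L.

Definition metric_le (Omega : Type) (d' d : Omega -> Omega -> \bar RealR) : Prop :=
  forall a b, d' a b <= d a b.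

(* Permutations acting on the right: alpha g is written (g alpha). *)
Definition perm_norm (Omega : Type) (d : Omega -> Omega -> \bar RealR)
  (g : Omega -> Omega) : \bar RealR :=
  ereal_sup [set d a (g a) | a in [set: Omega]].

Definition bounded_perm (Omega : Type) (d : Omega -> Omega -> \bar RealR)
  (g : Omega -> Omega) : Prop := perm_norm d g < +oo.

Definition in_Sym (Omega : Type) (A : set (Omega -> Omega)) : Prop :=
  forall g, A g -> bijective g.

Definition is_subgroup (Omega : Type) (G : set (Omega -> Omega)) : Prop :=
  [/\ in_Sym G, G id,
      (forall g h, G g -> G h -> G (h \o g)) &
      (forall g h, G g -> cancel g h -> cancel h g -> G h)].

Definition gen_subgroup (Omega : Type) (A : set (Omega -> Omega)) : set (Omega -> Omega) :=
  fun g => forall H : set (Omega -> Omega), is_subgroup H -> A `<=` H -> H g.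

Definition prec_kappa (Omega K : Type) (G1 G2 : set (Omega -> Omega)) : Prop :=
  exists U : set (Omega -> Omega),
    [/\ in_Sym U, card_lt {u : Omega -> Omega | U u} K &
        G1 `<=` gen_subgroup (G2 `|` U)].

Definition approx_kappa (Omega K : Type) (G1 G2 : set (Omega -> Omega)) : Prop :=
  prec_kappa K G1 G2 /\ prec_kappa K G2 G1.

Definition has_uncrowded_bd (Omega K : Type) (G : set (Omega -> Omega)) : Prop :=
  exists d : Omega -> Omega -> \bar RealR,
    [/\ gen_metric d, uncrowded K d & forall g, G g -> bounded_perm d g].

Definition has_unif_uncrowded_bd (Omega K : Type) (G : set (Omega -> Omega)) : Prop :=
  exists d : Omega -> Omega -> \bar RealR,
    [/\ gen_metric d, unif_uncrowded K d & forall g, G g -> bounded_perm d g].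

From Pilot Require Import Defs.
From HB Require Import structures.
From mathcomp Require Import all_boot all_order all_algebra.
From mathcomp Require Import boolp classical_sets reals ereal Rstruct.
From mathcomp Require Import lra.
Import Order.TTheory GRing.Theory Num.Theory.
Set Implicit Arguments. Unset Strict Implicit. Unset Printing Implicit Defensive.
Local Open Scope classical_set_scope.

(* Let d' = [jump_dist d U] be the path metric in which one may travel along
   d, or jump at cost 1 from y to u y or to u^-1 y for some u in U.  Then
   d' <= d, every u in U moves points by at most 1, so all of <G ∪ U> is
   d'-bounded, and a d'-ball of radius r lies in the set of points reached by
   at most ⌊r⌋ + 1 rounds of "a d-ball of radius r, then a jump".  Each round
   takes a union of fewer than kappa sets of size less than kappa, which stays
   below kappa by regularity; in the uniform case the same count gives a bound
   independent of the centre. *)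

Lemma card_le_trans (A B C : Type) : card_le A B -> card_le B C -> card_le A C.
Proof. by move=> [f fi] [g gi]; exists (g \o f) => x y /gi /fi. Qed.

Lemma card_le_lt_trans (A B K : Type) : card_le A B -> card_lt B K -> card_lt A K.
Proof.
move=> AB [BK nKB]; split; first exact: card_le_trans AB BK.
by move=> KA; apply: nKB; exact: card_le_trans KA AB.
Qed.

Lemma sval_inj (X : Type) (P : X -> Prop) : injective (@sval X P).
Proof. by move=> [x px] [y py] /= xy; apply: eq_exist. Qed.

Lemma card_le_sub (X : Type) (P Q : X -> Prop) :
  (forall x, P x -> Q x) -> card_le {x | P x} {x | Q x}.
Proof.
move=> PQ; exists (fun x => exist Q (sval x) (PQ _ (svalP x))).
by move=> x y [] /sval_inj.
Qed.

Lemma card_le_of_rel (X Y : Type) (A : X -> Y -> Prop) :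
  (forall x, exists y, A x y) -> (forall x x' y, A x y -> A x' y -> x = x') ->
  card_le X Y.
Proof.
move=> Atot Ainj; exists (fun x => projT1 (cid (Atot x))) => x x' e.
apply: (Ainj _ _ (projT1 (cid (Atot x)))); first exact: projT2 (cid (Atot x)).
by rewrite e; exact: projT2 (cid (Atot x')).
Qed.

Lemma card_le_total (X Y : Type) : card_le X Y \/ card_le Y X.
Proof.
pose pinj (A : set (X * Y)) :=
  (forall x y y', A (x, y) -> A (x, y') -> y = y') /\
  (forall x x' y, A (x, y) -> A (x', y) -> x = x').
have pinj_chain F : F `<=` pinj -> total_on F subset -> pinj (\bigcup_(A in F) A).
  move=> Fpinj Ftot; split=> [x y y'|x x' y] [A FA Axy] [B FB Bxy].
    by case: (Ftot _ _ FA FB) => [/(_ _ Axy) ABxy|/(_ _ Bxy) ABxy];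
      [apply: (Fpinj _ FB).1 ABxy Bxy | apply: (Fpinj _ FA).1 Axy ABxy].
  by case: (Ftot _ _ FA FB) => [/(_ _ Axy) ABxy|/(_ _ Bxy) ABxy];
    [apply: (Fpinj _ FB).2 ABxy Bxy | apply: (Fpinj _ FA).2 Axy ABxy].
have [A [[Afun Ainj] Amax]] := Zorn_bigcup pinj_chain.
have [Xtot|/existsNP [x0 /forallNP x0A]] := pselect (forall x, exists y, A (x, y)).
  by left; apply: card_le_of_rel Xtot _ => x x' y; apply: Ainj.
have [Ytot|/existsNP [y0 /forallNP y0A]] := pselect (forall y, exists x, A (x, y)).
  by right; apply: card_le_of_rel Ytot _ => y y' x; apply: Afun.
exfalso; apply: (Amax (A `|` [set (x0, y0)])).
  split; first by move=> p Ap; left.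
  by move=> /(_ (x0, y0) (or_intror erefl)) Ax0y0; exact: x0A Ax0y0.
split=> [x y y'|x x' y] [Ap|[-> ->]] [Ap'|[]].
- exact: Afun Ap Ap'.
- by move=> xx0; rewrite xx0 in Ap; case: (x0A _ Ap).
- by case: (x0A _ Ap').
- by move=> ->.
- exact: Ainj Ap Ap'.
- by move=> _ yy0; rewrite yy0 in Ap; case: (y0A _ Ap).
- by case: (y0A _ Ap').
- by move=> ->.
Qed.


Lemma card_le_sig_true (X : Type) : card_le X {x : X | True}.
Proof. by exists (fun x => exist _ x I) => x y []. Qed.

Lemma card_le_bigcup (I X L : Type) (P : X -> Prop) (F : I -> X -> Prop) :
  (forall x, P x -> exists i, F i x) -> (forall i, card_le {x | F i x} L) ->
  card_le {x | P x} (I * L).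
Proof.
move=> PF FL; pose f i := projT1 (cid (FL i)).
have f_inj i : injective (f i) := projT2 (cid (FL i)).
pose ix (x : {x | P x}) := cid (PF _ (svalP x)).
exists (fun x => (projT1 (ix x), f _ (exist _ (sval x) (projT2 (ix x))))).
move=> x y [] /=; case: (ix x) => i Fx; case: (ix y) => j Fy /= ij; subst j.
by move=> /f_inj [] /sval_inj.
Qed.

Lemma card_lt_bool (K : Type) : infinite_card K -> card_lt bool K.
Proof.
move=> Kinf; split.
  by apply: card_le_trans Kinf; exists nat_of_bool => [[] []].
move=> /(card_le_trans Kinf) [f f_inj].
have f01 : f 0 <> f 1 by move/f_inj.
have f02 : f 0 <> f 2 by move/f_inj.
have f12 : f 1 <> f 2 by move/f_inj.
by move: f01 f02 f12; case: (f 0); case: (f 1); case: (f 2).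
Qed.

Section RegularCardinal.
Variables (K : Type) (Kreg : regular_card K).

Lemma card_lt_bigcup (I X : Type) (P : X -> Prop) (F : I -> X -> Prop) :
  (forall x, P x -> exists i, F i x) -> card_lt I K ->
  (forall i, card_lt {x | F i x} K) -> card_lt {x | P x} K.
Proof.
move=> PF IK FK.
have KnleP : ~ card_le K {x | P x}.
  move=> [f f_inj]; pose Ff i k := F i (sval (f k)).
  have FfK i : card_lt {k | Ff i k} K.
    apply: card_le_lt_trans (FK i).
    exists (fun k => exist (F i) (sval (f (sval k))) (svalP k)).
    by move=> k k' [] /sval_inj /f_inj /sval_inj.
  have [k kF] := Kreg IK FfK.
  by have [i] := PF _ (svalP (f k)); apply: kF.
by split=> //; case: (card_le_total {x | P x} K) => // /KnleP.
Qed.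

Lemma card_lt_prod (A B : Type) : card_lt A K -> card_lt B K -> card_lt (A * B) K.
Proof.
move=> AK BK; apply: card_le_lt_trans (card_le_sig_true _) _.
apply: (@card_lt_bigcup A _ _ (fun a p => p.1 = a)) => // [p _|a]; first by exists p.1.
apply: card_le_lt_trans BK; exists (fun p => (sval p).2).
move=> [[a1 b1] /= e1] [[a2 b2] /= e2] /= b12.
by apply: eq_exist; rewrite e1 e2 b12.
Qed.

Lemma card_lt_option (A : Type) : card_lt bool K -> card_lt A K -> card_lt (option A) K.
Proof.
move=> boolK AK; have [[a0]|A0] := pselect (inhabited A).
  apply: card_le_lt_trans (card_lt_prod AK boolK).
  exists (fun o => if o is Some a then (a, true) else (a0, false)).
  by move=> [x|] [y|] //= [] ->.
apply: card_le_lt_trans boolK; exists (fun o => if o is Some _ then true else false).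
by move=> [x|] [y|] //; case: A0; constructor.
Qed.

End RegularCardinal.

Lemma card_le_prod (A A' B B' : Type) :
  card_le A A' -> card_le B B' -> card_le (A * B) (A' * B').
Proof.
move=> [f f_inj] [g g_inj]; exists (fun p => (f p.1, g p.2)).
by move=> [? ?] [? ?] [] /f_inj -> /g_inj ->.
Qed.

Fixpoint iter_prod (L W : Type) (n : nat) : Type :=
  if n is m.+1 then ((L * W) * iter_prod L W m)%type else L.

Lemma card_lt_iter_prod (K L W : Type) n : regular_card K ->
  card_lt L K -> card_lt W K -> card_lt (iter_prod L W n) K.
Proof.
move=> Kreg LK WK; elim: n => [|n IH] //=.
by apply: card_lt_prod => //; apply: card_lt_prod.
Qed.

Section Reach.
Variables (X : Type) (B S : X -> X -> Prop).

Fixpoint reach (n : nat) (x b : X) : Prop :=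
  if n is m.+1 then exists y z, [/\ B x y, S y z & reach m z b] else B x b.

Lemma reach_lift : (forall x, B x x) -> (forall x, S x x) ->
  forall m n x b, (m <= n)%N -> reach m x b -> reach n x b.
Proof.
move=> Brefl Srefl m n x b /subnK <-; elim: (n - m)%N x => [|k IH] x // mxb.
by exists x, x; split=> //; apply: IH.
Qed.

Let reachS_cover n x b :
  reach n.+1 x b -> exists p : {p | B x p.1 /\ S p.1 p.2}, reach n (sval p).2 b.
Proof. by move=> [y [z [xy yz zb]]]; exists (exist _ (y, z) (conj xy yz)). Qed.

Let step_cover x (p : X * X) : B x p.1 /\ S p.1 p.2 ->
  exists y : {y | B x y}, sval y = p.1 /\ S (sval y) p.2.
Proof. by move=> [xy yz]; exists (exist _ p.1 xy). Qed.

Let card_le_step_fibre x (y : {y | B x y}) :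
  card_le {p : X * X | sval y = p.1 /\ S (sval y) p.2} {z | S (sval y) z}.
Proof.
exists (fun p => exist _ (sval p).2 (proj2 (svalP p))).
move=> [[y1 z1] h1] [[y2 z2] h2] /= [] z12; apply: eq_exist.
by case: h1 h2 => /= <- _ [/= <- _]; rewrite z12.
Qed.

Lemma card_lt_reach (K : Type) : regular_card K ->
  (forall x, card_lt {y | B x y} K) -> (forall y, card_lt {z | S y z} K) ->
  forall n x, card_lt {b | reach n x b} K.
Proof.
move=> Kreg BK SK; elim=> [|n IH] x //=.
have stepK : card_lt {p | B x p.1 /\ S p.1 p.2} K.
  apply: (card_lt_bigcup Kreg (@step_cover x) (BK x)) => y.
  exact: card_le_lt_trans (card_le_step_fibre y) (SK _).
exact: (card_lt_bigcup Kreg (@reachS_cover n x) stepK (fun p => IH _)).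
Qed.

Lemma card_le_reach (L W : Type) :
  (forall x, card_le {y | B x y} L) -> (forall y, card_le {z | S y z} W) ->
  forall n x, card_le {b | reach n x b} (iter_prod L W n).
Proof.
move=> BL SW; elim=> [|n IH] x //=.
apply: (card_le_trans (card_le_bigcup (@reachS_cover n x) (fun p => IH _))).
apply: card_le_prod; last by exists id.
apply: (card_le_trans (card_le_bigcup (@step_cover x) _)).
  by move=> y; apply: card_le_trans (card_le_step_fibre y) (SW _).
by apply: card_le_prod; [exact: BL | exists id].
Qed.

End Reach.

Local Open Scope ereal_scope.

(* Staying put counts as a jump: this makes [jump U] reflexive, so that
   [reach] can pad chains with few jumps. *)
Definition jump (Omega : Type) (U : set (Omega -> Omega)) (y z : Omega) : Prop :=
  z = y \/ exists2 u, U u & (z = u y \/ y = u z).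

Inductive chain (Omega : Type) (d : Omega -> Omega -> \bar RealR)
    (U : set (Omega -> Omega)) : Omega -> Omega -> \bar RealR -> Prop :=
  | chain_nil x : chain d U x x 0
  | chain_dist x y b s : chain d U y b s -> chain d U x b (d x y + s)
  | chain_jump x y b s : jump U x y -> chain d U y b s -> chain d U x b (1 + s).

Definition jump_dist (Omega : Type) (d : Omega -> Omega -> \bar RealR)
    (U : set (Omega -> Omega)) (a b : Omega) : \bar RealR :=
  ereal_inf [set s | chain d U a b s].

Lemma jump_refl (Omega : Type) (U : set (Omega -> Omega)) x : jump U x x.
Proof. by left. Qed.

Lemma jump_sym (Omega : Type) (U : set (Omega -> Omega)) x y : jump U x y -> jump U y x.
Proof.
move=> [->|[u Uu [->|->]]]; first exact: jump_refl.
- by right; exists u => //; right.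
- by right; exists u => //; left.
Qed.

Section JumpDist.
Variables (Omega : Type) (d : Omega -> Omega -> \bar RealR) (U : set (Omega -> Omega)).
Hypothesis dm : gen_metric d.

Let d_ge0 a b : 0 <= d a b. Proof. by case: dm. Qed.
Let d_eq0 a b : d a b = 0 <-> a = b. Proof. by case: dm. Qed.
Let d_sym a b : d a b = d b a. Proof. by case: dm. Qed.
Let d_tri a b c : d a c <= d a b + d b c. Proof. by case: dm. Qed.
Let d_refl a : d a a = 0. Proof. exact/d_eq0. Qed.

Lemma chain_ge0 a b s : chain d U a b s -> 0 <= s.
Proof. by elim=> // x y b' s' _ s'0; apply: adde_ge0. Qed.

Lemma chain_cat a b c s t : chain d U a b s -> chain d U b c t -> chain d U a c (s + t).
Proof.
elim=> [x|x y b' s' _ IH|x y b' s' xy _ IH] bc; first by rewrite add0e.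
- by rewrite -addeA; apply: chain_dist; exact: IH.
- by rewrite -addeA; apply: chain_jump xy _; exact: IH.
Qed.

Lemma chain_rev a b s : chain d U a b s -> chain d U b a s.
Proof.
elim=> [x|x y b' s' _ IH|x y b' s' xy _ IH]; first exact: chain_nil.
- by rewrite addeC d_sym; apply: chain_cat IH _; rewrite -[d y x]adde0; do 2!constructor.
- rewrite addeC; apply: chain_cat IH _; rewrite -[1]adde0.
  by apply: chain_jump (jump_sym xy) (chain_nil _ _ _).
Qed.

Lemma chain_first_jump a b s : chain d U a b s ->
  d a b <= s \/ exists y z t, [/\ jump U y z, chain d U z b t & d a y + 1 + t <= s].
Proof.
elim=> [x|x y b' s' _ [yb|[y1 [z [t [jz zb le_t]]]]]|x y b' s' xy yb _].
- by left; rewrite d_refl.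
- by left; apply: le_trans (d_tri x y b') _; apply: leeD.
- right; exists y1, z, t; split=> //; apply: le_trans _ (leeD (lexx _) le_t).
  by rewrite !addeA; do 2!apply: leeD => //.
- by right; exists x, y, s'; rewrite d_refl add0e.
Qed.

Lemma jump_dist_ge0 a b : 0 <= jump_dist d U a b.
Proof. by apply/ereal_infP => s; apply: chain_ge0. Qed.

Lemma jump_dist_le_chain a b s : chain d U a b s -> jump_dist d U a b <= s.
Proof. by move=> c; apply: ereal_inf_lbound. Qed.

Lemma jump_dist_le : metric_le (jump_dist d U) d.
Proof.
move=> a b; rewrite -[d a b]adde0.
by apply/jump_dist_le_chain/chain_dist/chain_nil.
Qed.

Lemma jump_dist_le1 a b : jump U a b -> jump_dist d U a b <= 1.
Proof.
by move=> ab; rewrite -[1]adde0; apply/jump_dist_le_chain/(chain_jump ab)/chain_nil.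
Qed.

Lemma jump_dist_sym a b : jump_dist d U a b = jump_dist d U b a.
Proof. by rewrite /jump_dist; congr ereal_inf; apply/seteqP; split=> s; apply: chain_rev. Qed.

Lemma jump_dist_eq0 a b : jump_dist d U a b = 0 <-> a = b.
Proof.
split=> [dab0|->]; last first.
  by apply/le_anti; rewrite jump_dist_ge0 andbT; apply/jump_dist_le_chain/chain_nil.
apply: contrapT => nab.
have d_gt0 : 0 < d a b by rewrite lt_neqAle d_ge0 andbT; apply/eqP => /esym /d_eq0.
have : jump_dist d U a b < Order.min 1 (d a b) by rewrite dab0 lt_min d_gt0 lte01.
case/ereal_inf_lt => s /= abs; rewrite lt_min => /andP [s_lt1 s_lt_d].
case: (chain_first_jump abs) => [|[y [z [t [_ zb le_t]]]]]; first by rewrite leNgt s_lt_d.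
suff : 1 <= s by rewrite leNgt s_lt1.
apply: le_trans le_t; rewrite -addeA -[X in X <= _]add0e.
by apply: leeD => //; apply: leeDl; apply: chain_ge0 zb.
Qed.

Lemma jump_dist_triangle a b c :
  jump_dist d U a c <= jump_dist d U a b + jump_dist d U b c.
Proof.
have [ab0 bc0] := (jump_dist_ge0 a b, jump_dist_ge0 b c).
have [->|ab_oo] := eqVneq (jump_dist d U a b) +oo.
  by rewrite addye ?leey // gt_eqF // (lt_le_trans _ bc0) // ltNy0.
have [->|bc_oo] := eqVneq (jump_dist d U b c) +oo.
  by rewrite addey ?leey // gt_eqF // (lt_le_trans _ ab0) // ltNy0.
have ab_fin : jump_dist d U a b \is a fin_num by rewrite ge0_fin_numE // ltey.
have bc_fin : jump_dist d U b c \is a fin_num by rewrite ge0_fin_numE // ltey.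
apply/lee_addgt0Pr => e e0.
have e2_gt0 : (0 < e / 2)%R by lra.
have [s abs s_lt] := lb_ereal_inf_adherent e2_gt0 ab_fin.
have [t bct t_lt] := lb_ereal_inf_adherent e2_gt0 bc_fin.
apply: le_trans (jump_dist_le_chain (chain_cat abs bct)) _.
rewrite -/(jump_dist d U a b) -(fineK ab_fin) in s_lt *.
rewrite -/(jump_dist d U b c) -(fineK bc_fin) in t_lt *.
by apply/ltW/(lt_le_trans (lteD s_lt t_lt)); rewrite -!EFinD lee_fin; lra.
Qed.

Lemma gen_metric_jump_dist : gen_metric (jump_dist d U).
Proof.
split; [exact: jump_dist_ge0 | exact: jump_dist_eq0 |
        exact: jump_dist_sym | exact: jump_dist_triangle].
Qed.

End JumpDist.

Section PermNorm.
Variable Omega : Type.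
Implicit Types d : Omega -> Omega -> \bar RealR.

Lemma perm_norm_le d g x : (forall a, d a (g a) <= x) -> perm_norm d g <= x.
Proof. by move=> gx; apply/ereal_supP => _ [a _ <-]. Qed.

Lemma le_perm_norm d g a : d a (g a) <= perm_norm d g.
Proof. by apply: ereal_sup_ubound; exists a. Qed.

Lemma bounded_perm_le d' d g : metric_le d' d -> bounded_perm d g -> bounded_perm d' g.
Proof.
move=> d'd; apply: le_lt_trans; apply: perm_norm_le => a.
exact: le_trans (d'd a (g a)) (le_perm_norm _ _ _).
Qed.

Variable d : Omega -> Omega -> \bar RealR.
Hypothesis dm : gen_metric d.

Lemma is_subgroup_bounded : is_subgroup (fun g => bijective g /\ bounded_perm d g).
Proof.
case: dm => _ d_eq0 d_sym d_tri; split.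
- by move=> g [].
- split; first by exists id.
  by apply: le_lt_trans (ltry 0); apply: perm_norm_le => a; rewrite (proj2 (d_eq0 a a)).
- move=> g h [g_bij g_bd] [h_bij h_bd]; split; first exact: bij_comp.
  apply: le_lt_trans (lte_add_pinfty g_bd h_bd); apply: perm_norm_le => a.
  by apply: le_trans (d_tri a (g a) _) _; apply: leeD; apply: le_perm_norm.
- move=> g h [g_bij g_bd] gh hg; split; first exact: Bijective hg gh.
  apply: le_lt_trans g_bd; apply: perm_norm_le => a.
  by rewrite -{1}[a]hg d_sym; apply: le_perm_norm.
Qed.

Lemma gen_subgroup_bounded (G U : set (Omega -> Omega)) :
  in_Sym G -> in_Sym U ->
  (forall g, G g -> bounded_perm d g) -> (forall u, U u -> bounded_perm d u) ->
  forall g, gen_subgroup (G `|` U) g -> bounded_perm d g.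
Proof.
move=> GS US G_bd U_bd g /(_ _ is_subgroup_bounded) [] // h [Gh|Uh].
- by split; [exact: GS | exact: G_bd].
- by split; [exact: US | exact: U_bd].
Qed.

End PermNorm.

(* [None] labels staying put, [Some (u, true)] the jump to [u y] and
   [Some (u, false)] the jump to [u^-1 y]. *)
Definition jump_label (Omega : Type) (U : set (Omega -> Omega)) : Type :=
  option ({u | U u} * bool).

Lemma card_le_jump (Omega : Type) (U : set (Omega -> Omega)) y :
  in_Sym U -> card_le {z | jump U y z} (jump_label U).
Proof.
move=> US; pose R (z : {z | jump U y z}) (w : jump_label U) :=
  match w with
  | None => sval z = y
  | Some (u, true) => sval z = sval u y
  | Some (u, false) => y = sval u (sval z)
  end.
apply: (@card_le_of_rel _ _ R) => [[z [zy|[u Uu [zu|zu]]]]|z z'].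
- by exists None.
- by exists (Some (exist _ u Uu, true)).
- by exists (Some (exist _ u Uu, false)).
case=> [[[u Uu] []]|] /= e e'; apply: sval_inj; rewrite ?e ?e' //.
by apply: (bij_inj (US _ Uu)); rewrite -e -e'.
Qed.

Lemma card_lt_jump_label (Omega K : Type) (U : set (Omega -> Omega)) :
  regular_card K -> card_lt bool K -> card_lt {u | U u} K -> card_lt (jump_label U) K.
Proof. by move=> Kreg boolK UK; apply: card_lt_option => //; apply: card_lt_prod. Qed.

Section JumpDistBalls.
Variables (Omega : Type) (d : Omega -> Omega -> \bar RealR) (U : set (Omega -> Omega)).
Hypothesis dm : gen_metric d.

Lemma chain_reach (r : RealR) k x b s : chain d U x b s ->
  s < r%:E -> s < k%:R%:E -> reach (fun c => Defs.ball d c r%:E) (jump U) k x b.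
Proof.
have d_refl a : d a a = 0 by case: dm => _ /(_ a a) [_ ->].
elim: k x b s => [|k IH] x b s xb s_lt_r s_lt_k.
  by have := chain_ge0 dm xb; rewrite leNgt s_lt_k.
have r_gt0 : (0 < r)%R by rewrite -lte_fin; apply: le_lt_trans (chain_ge0 dm xb) s_lt_r.
case: (chain_first_jump dm xb) => [xb_le|[y [z [t [yz zb le_t]]]]].
  apply: (@reach_lift _ _ _ _ _ 0) => // [a|a|]; last exact: le_lt_trans s_lt_r.
    by rewrite /Defs.ball /= d_refl lte_fin.
  exact: jump_refl.
have [dxy_ge0 t_ge0] : 0 <= d x y /\ 0 <= t by split; [case: dm | exact: chain_ge0 zb].
exists y, z; split=> //.
  apply: le_lt_trans s_lt_r; apply: le_trans le_t.
  by rewrite -addeA; apply: leeDl; apply: adde_ge0.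
apply: IH zb _ _.
  apply: le_lt_trans s_lt_r; apply: le_trans le_t.
  by apply: leeDr; apply: adde_ge0.
rewrite -(@lteD2lE _ 1) // -EFinD nat1r.
apply: le_lt_trans s_lt_k; apply: le_trans le_t; rewrite -addeA addeC.
by apply: leeDl.
Qed.

Lemma jump_dist_ball_reach (r : RealR) a b : Defs.ball (jump_dist d U) a r%:E b ->
  reach (fun c => Defs.ball d c r%:E) (jump U) (Num.truncn r).+1 a b.
Proof.
case/ereal_inf_lt => s ab s_lt_r; apply: (chain_reach ab s_lt_r).
by apply: (lt_trans s_lt_r); rewrite lte_fin truncnS_gt.
Qed.

Lemma uncrowded_jump_dist (K : Type) :
  regular_card K -> card_lt bool K -> in_Sym U -> card_lt {u | U u} K ->
  uncrowded K d -> uncrowded K (jump_dist d U).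
Proof.
move=> Kreg boolK US UK d_unc a r.
apply: card_le_lt_trans (card_le_sub (@jump_dist_ball_reach r a)) _.
apply: card_lt_reach => // y.
exact: card_le_lt_trans (card_le_jump y US) (card_lt_jump_label Kreg boolK UK).
Qed.

Lemma unif_uncrowded_jump_dist (K : Type) :
  regular_card K -> card_lt bool K -> in_Sym U -> card_lt {u | U u} K ->
  unif_uncrowded K d -> unif_uncrowded K (jump_dist d U).
Proof.
move=> Kreg boolK US UK d_unc r; have [L [LK d_L]] := d_unc r.
exists (iter_prod L (jump_label U) (Num.truncn r).+1); split.
  exact: card_lt_iter_prod Kreg LK (card_lt_jump_label Kreg boolK UK).
move=> a; apply: card_le_trans (card_le_sub (@jump_dist_ball_reach r a)) _.
by apply: card_le_reach => // y; apply: card_le_jump.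
Qed.

End JumpDistBalls.

Section Extension.
Variables (Omega : Type) (d : Omega -> Omega -> \bar RealR) (G U : set (Omega -> Omega)).
Hypotheses (dm : gen_metric d) (GS : in_Sym G) (US : in_Sym U).
Hypothesis G_bd : forall g, G g -> bounded_perm d g.

Lemma jump_dist_bounded u : U u -> bounded_perm (jump_dist d U) u.
Proof.
move=> Uu; apply: le_lt_trans (ltry 1); apply: perm_norm_le => a.
by apply: jump_dist_le1; right; exists u => //; left.
Qed.

Lemma gen_subgroup_jump_dist_bounded g :
  gen_subgroup (G `|` U) g -> bounded_perm (jump_dist d U) g.
Proof.
apply: (gen_subgroup_bounded (gen_metric_jump_dist U dm) GS US _ jump_dist_bounded).
by move=> h Gh; apply: bounded_perm_le (jump_dist_le d U) (G_bd Gh).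
Qed.

End Extension.

Section Inheritance.
Variables (Omega K : Type) (Kreg : regular_card K) (boolK : card_lt bool K).
Variables (G H : set (Omega -> Omega)) (GS : in_Sym G) (HG : prec_kappa K H G).

Lemma prec_kappa_has_uncrowded_bd : has_uncrowded_bd K G -> has_uncrowded_bd K H.
Proof.
case: HG => U [US UK HGU] [d [dm d_unc G_bd]]; exists (jump_dist d U); split.
- exact: gen_metric_jump_dist.
- exact: uncrowded_jump_dist.
- by move=> h /HGU; apply: gen_subgroup_jump_dist_bounded.
Qed.

Lemma prec_kappa_has_unif_uncrowded_bd :
  has_unif_uncrowded_bd K G -> has_unif_uncrowded_bd K H.
Proof.
case: HG => U [US UK HGU] [d [dm d_unc G_bd]]; exists (jump_dist d U); split.
- exact: gen_metric_jump_dist.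
- exact: unif_uncrowded_jump_dist.
- by move=> h /HGU; apply: gen_subgroup_jump_dist_bounded.
Qed.

End Inheritance.

Theorem theorem3p2 (Omega K : Type) :
  infinite_card Omega -> infinite_card K -> regular_card K -> card_le K Omega ->
  (* main statement, kappa-uncrowded version *)
  (forall (d : Omega -> Omega -> \bar RealR) (G : set (Omega -> Omega)),
     gen_metric d -> uncrowded K d -> is_subgroup G ->
     (forall g, G g -> bounded_perm d g) ->
     forall U : set (Omega -> Omega), in_Sym U ->
       card_lt {u : Omega -> Omega | U u} K ->
       exists d' : Omega -> Omega -> \bar RealR,
         [/\ gen_metric d', metric_le d' d, uncrowded K d',
             (forall u, U u -> bounded_perm d' u) &
             (forall g, gen_subgroup (G `|` U) g -> bounded_perm d' g)]) /\
  (* main statement, uniformly kappa-uncrowded version *)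
  (forall (d : Omega -> Omega -> \bar RealR) (G : set (Omega -> Omega)),
     gen_metric d -> unif_uncrowded K d -> is_subgroup G ->
     (forall g, G g -> bounded_perm d g) ->
     forall U : set (Omega -> Omega), in_Sym U ->
       card_lt {u : Omega -> Omega | U u} K ->
       exists d' : Omega -> Omega -> \bar RealR,
         [/\ gen_metric d', metric_le d' d, unif_uncrowded K d',
             (forall u, U u -> bounded_perm d' u) &
             (forall g, gen_subgroup (G `|` U) g -> bounded_perm d' g)]) /\
  (* consequences: inheritance along <=_kappa and ~_kappa *)
  (forall G H : set (Omega -> Omega), is_subgroup G -> is_subgroup H ->
     prec_kappa K H G ->
     (has_uncrowded_bd K G -> has_uncrowded_bd K H) /\
     (has_unif_uncrowded_bd K G -> has_unif_uncrowded_bd K H)) /\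
  (forall G H : set (Omega -> Omega), is_subgroup G -> is_subgroup H ->
     approx_kappa K H G ->
     (has_uncrowded_bd K G -> has_uncrowded_bd K H) /\
     (has_unif_uncrowded_bd K G -> has_unif_uncrowded_bd K H)).
Proof.
move=> _ /card_lt_bool boolK Kreg _.
have inherit G H : is_subgroup G -> prec_kappa K H G ->
    (has_uncrowded_bd K G -> has_uncrowded_bd K H) /\
    (has_unif_uncrowded_bd K G -> has_unif_uncrowded_bd K H).
  by case=> GS _ _ _ HG; split;
    [exact: prec_kappa_has_uncrowded_bd | exact: prec_kappa_has_unif_uncrowded_bd].
split; last split; last split.
- move=> d G dm d_unc [GS _ _ _] G_bd U US UK; exists (jump_dist d U); split.
  + exact: gen_metric_jump_dist.
  + exact: jump_dist_le.
  + exact: uncrowded_jump_dist.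
  + exact: jump_dist_bounded.
  + exact: gen_subgroup_jump_dist_bounded.
- move=> d G dm d_unc [GS _ _ _] G_bd U US UK; exists (jump_dist d U); split.
  + exact: gen_metric_jump_dist.
  + exact: jump_dist_le.
  + exact: unif_uncrowded_jump_dist.
  + exact: jump_dist_bounded.
  + exact: gen_subgroup_jump_dist_bounded.
- by move=> G H Gs _; apply: inherit.
- by move=> G H Gs _ [HG _]; apply: inherit.
Qed.
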